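(* Let $D$ be a Lagrangian diagram obtained by applying Ng's resolution to a front diagram of a Legendrian knot. Then the flooding algorithm applied to the area inequalities of $D$ succeeds, i.e. it assigns every crossing of $D$ to a tier.
   Context: Front diagram: projection $(x,y,z)\mapsto(x,z)$ of a Legendrian knot in $(\mathbb{R}^3,dz-y\,dx)$. Ng's resolution (Ng, ''Computable Legendrian invariants'') converts a front diagram into a Lagrangian diagram of a Legendrian isotopic knot, each front crossing becoming a crossing and each right cusp becoming a crossing bounding a small loop. For a Lagrangian diagram, an area patch is a bounded complementary region; traversing its boundary with the boundary orientation, a corner where one passes from an understrand to an overstrand has positive Reeb sign, otherwise negative. The area inequality of a patch says the Reeb-sign-weighted sum of the heights $h(q)$ of its corners is $>0$; the collection of these is $\mathcal{R}$, with $f_i:\sum_j\alpha_{i,j}h(q_j)>0$. Flooding algorithm: start with $\mathcal{R}'=\mathcal{R}$, $k=1$. (i) Let $T_k$ be the set of not-yet-assigned crossings $q_j$ with $\alpha_{i,j}\ge0$ for all $f_i\in\mathcal{R}'$. (ii) If $T_k=\emptyset$, the algorithm fails; otherwise remove from $\mathcal{R}'$ every $f_i$ having $\alpha_{i,j}>0$ for some $q_j\in T_k$. (iii) If $\mathcal{R}'\neq\emptyset$ increase $k$ and repeat; if $\mathcal{R}'=\emptyset$, put all remaining crossings in a final tier $T_{k+1}$ and the algorithm succeeds. *)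

From Stdlib Require Import List Arith ZArith Relations ClassicalEpsilon.
Import ListNotations.

(* Front diagrams, read from left to right (increasing x).  Between two
   consecutive events there are n strands, numbered 0..n-1 from bottom to top
   (increasing z).  Events (at pairwise distinct x-coordinates):
   - LCusp i : a left cusp creating two new strands at positions i, i+1
               (requires i <= n);
   - Cross i : strands i and i+1 cross (requires i+1 < n);
   - RCusp i : strands i and i+1 end in a right cusp (requires i+1 < n).     *)
Inductive event : Type := LCusp (i : nat) | Cross (i : nat) | RCusp (i : nat).
Definition front := list event.

Definition step_count (n : nat) (e : event) : nat :=
  match e with LCusp _ => n + 2 | Cross _ => n | RCusp _ => n - 2 end.

Definition event_ok (n : nat) (e : event) : Prop :=
  match e with
  | LCusp i => i <= n
  | Cross i => i + 1 < n
  | RCusp i => i + 1 < n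
  end.

Fixpoint valid_from (n : nat) (f : front) : Prop :=
  match f with
  | [] => n = 0
  | e :: f' => event_ok n e /\ valid_from (step_count n e) f'
  end.

Definition valid_front (f : front) : Prop := valid_from 0 f.

Definition nstr (f : front) (s : nat) : nat := fold_left step_count (firstn s f) 0.

Definition ev (f : front) (s : nat) : option event := nth_error f s.

(* Strand pieces (s, p): strand p of slice s.  Connectivity of the front.    *)
Definition strand_node (f : front) (a : nat * nat) : Prop :=
  fst a <= length f /\ snd a < nstr f (fst a).

Definition strand_edge (f : front) (a b : nat * nat) : Prop :=
  exists s e, ev f s = Some e /\
  match e with
  | LCusp i =>
      (a = (s + 1, i) /\ b = (s + 1, i + 1))
      \/ (exists p, p < i /\ a = (s, p) /\ b = (s + 1, p))
      \/ (exists p, i <= p < nstr f s /\ a = (s, p) /\ b = (s + 1, p + 2))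
  | Cross i =>
      (a = (s, i) /\ b = (s + 1, i + 1))
      \/ (a = (s, i + 1) /\ b = (s + 1, i))
      \/ (exists p, p < nstr f s /\ p <> i /\ p <> i + 1 /\ a = (s, p) /\ b = (s + 1, p))
  | RCusp i =>
      (a = (s, i) /\ b = (s, i + 1))
      \/ (exists p, p < i /\ a = (s, p) /\ b = (s + 1, p))
      \/ (exists p, i + 2 <= p < nstr f s /\ a = (s, p) /\ b = (s + 1, p - 2))
  end.

(* f is a (generic) front diagram of a Legendrian KNOT: one component. *)
Definition knot_front (f : front) : Prop :=
  valid_front f /\
  (exists a, strand_node f a) /\
  (forall a b, strand_node f a -> strand_node f b ->
     clos_refl_sym_trans _ (strand_edge f) a b).

(* Gap (s, g), g <= nstr f s, is the part of slice s
   between strand g-1 and strand g (gap 0 below everything, gap (nstr f s)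
   above everything).  Gaps 0 and (nstr f s) of a slice lie in the unbounded
   region, which also connects them.                                         *)
Definition gap_node (f : front) (a : nat * nat) : Prop :=
  fst a <= length f /\ snd a <= nstr f (fst a).

Definition gap_edge (f : front) (a b : nat * nat) : Prop :=
  (exists s, s <= length f /\ a = (s, 0) /\ b = (s, nstr f s))
  \/
  (exists s e, ev f s = Some e /\
   match e with
   | LCusp i => exists g, g <= nstr f s /\
        ((g <= i /\ a = (s, g) /\ b = (s + 1, g)) \/
         (i <= g /\ a = (s, g) /\ b = (s + 1, g + 2)))
   | Cross i => exists g, g <= nstr f s /\ g <> i + 1 /\
        a = (s, g) /\ b = (s + 1, g)
   | RCusp i => exists g, g <= nstr f s /\
        ((g <= i /\ a = (s, g) /\ b = (s + 1, g)) \/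
         (i + 2 <= g /\ a = (s, g) /\ b = (s + 1, g - 2)))
   end).

Definition same_region (f : front) (a b : nat * nat) : Prop :=
  clos_refl_sym_trans _ (gap_edge f) a b.

(* The Lagrangian diagram D obtained by Ng's resolution of f: it is planar
   isotopic to f with left cusps smoothed, each front crossing kept as a
   crossing (the strand of smaller front slope, i.e. the one descending from
   upper-left to lower-right, is the overstrand) and each right cusp replaced
   by a crossing followed by a small loop (the upper strand is the overstrand).
   Its crossings are indexed by the positions q of Cross/RCusp events.
   Its complementary regions are the regions of the front complement (gap
   components) plus, for each right cusp, the interior of its small loop.    *)
Inductive rkey : Type := GapK (s g : nat) | LoopK (s : nat).

Definition is_crossing (f : front) (q : nat) : Prop :=
  exists i, ev f q = Some (Cross i) \/ ev f q = Some (RCusp i).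

(* area patches = bounded complementary regions (given by a representative) *)
Definition is_patch (f : front) (k : rkey) : Prop :=
  match k with
  | GapK s g => gap_node f (s, g) /\ ~ same_region f (s, g) (0, 0)
  | LoopK s => exists i, ev f s = Some (RCusp i)
  end.

Definition same_patch (f : front) (k k' : rkey) : Prop :=
  match k, k' with
  | GapK s g, GapK s' g' => same_region f (s, g) (s', g')
  | LoopK s, LoopK s' => s = s'
  | _, _ => False
  end.

(* The four quadrants (corners) at crossing q, with their Reeb signs
   (boundary oriented counterclockwise; +1 when passing from under- to
   overstrand).  Quadrants: left, right, below, above. *)
Definition corners (f : front) (q : nat) : list (rkey * Z) :=
  match ev f q with
  | Some (Cross i) =>
      [(GapK q (i + 1), 1%Z); (GapK (q + 1) (i + 1), 1%Z);
       (GapK q i, (-1)%Z); (GapK q (i + 2), (-1)%Z)]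
  | Some (RCusp i) =>
      [(GapK q (i + 1), 1%Z); (LoopK q, 1%Z);
       (GapK q i, (-1)%Z); (GapK q (i + 2), (-1)%Z)]
  | _ => []
  end.

(* alpha f k q : coefficient of h(q) in the area inequality of patch k
   (Reeb-sign-weighted count of the corners of the patch at q). *)
Definition alpha (f : front) (k : rkey) (q : nat) : Z :=
  fold_right
    (fun c acc =>
       ((if excluded_middle_informative (same_patch f k (fst c)) then snd c else 0)
        + acc)%Z)
    0%Z (corners f q).

(* The flooding algorithm.  State: R' (predicate on patch representatives)
   and the set A of already assigned crossings.                             *)
Definition tier_cand (f : front) (Rp : rkey -> Prop) (A : nat -> Prop) (q : nat) : Prop :=
  is_crossing f q /\ ~ A q /\ (forall k, Rp k -> (0 <= alpha f k q)%Z).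

Definition flood_remove (f : front) (Rp : rkey -> Prop) (A : nat -> Prop) : rkey -> Prop :=
  fun k => Rp k /\ ~ (exists q, tier_cand f Rp A q /\ (0 < alpha f k q)%Z).

Definition flood_assign (f : front) (Rp : rkey -> Prop) (A : nat -> Prop) : nat -> Prop :=
  fun q => A q \/ tier_cand f Rp A q.

(* flood_succeeds f Rp A : the algorithm, run from state (Rp, A), succeeds.
   (It fails exactly when some T_k is empty; no derivation exists then.) *)
Inductive flood_succeeds (f : front) : (rkey -> Prop) -> (nat -> Prop) -> Prop :=
| flood_last Rp A :
    (exists q, tier_cand f Rp A q) ->
    (forall k, ~ flood_remove f Rp A k) ->
    flood_succeeds f Rp A
| flood_next Rp A :
    (exists q, tier_cand f Rp A q) ->
    (exists k, flood_remove f Rp A k) ->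
    flood_succeeds f (flood_remove f Rp A) (flood_assign f Rp A) ->
    flood_succeeds f Rp A.

Definition flooding_succeeds (f : front) : Prop :=
  flood_succeeds f (is_patch f) (fun _ => False).

(* Following a bounded region
   rightwards from any of its gaps, it must stop at a crossing whose left
   quadrant lies in the region while neither its lower nor its upper quadrant
   does (the region cannot reach the right end, where only the unbounded
   region lives); there the region's coefficient is positive.  A negative
   coefficient at q means the region contains the lower or upper quadrant of
   q, hence continues past q, so it has a positive coefficient at a crossing
   to the right of q.  Consequently the rightmost unassigned crossing always
   qualifies for the next tier: a remaining patch with a negative coefficient
   there would have a positive coefficient at an already assigned crossing,
   and would have been removed when that crossing was assigned.  Each round
   therefore assigns a crossing, and a remaining patch always has an
   unassigned crossing with positive coefficient, so no tier is empty. *)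

From Stdlib Require Import List Arith ZArith Relations ClassicalEpsilon Classical Lia.
Import ListNotations.

Lemma firstn_succ_snoc {A} (l : list A) s e :
  nth_error l s = Some e -> firstn (S s) l = firstn s l ++ [e].
Proof.
  revert s; induction l as [|x l IH]; intros [|s] H; simpl in *; try discriminate.
  - injection H; intros ->; reflexivity.
  - rewrite (IH s H). reflexivity.
Qed.

Lemma ev_lt f s e : ev f s = Some e -> s < length f.
Proof. intro H. apply nth_error_Some. unfold ev in H. rewrite H. discriminate. Qed.

Lemma ev_exists f s : s < length f -> exists e, ev f s = Some e.
Proof.
  intro H. unfold ev. destruct (nth_error f s) eqn:E; eauto.
  apply nth_error_None in E. lia.
Qed.

Lemma crossing_lt f q : is_crossing f q -> q < length f.
Proof. intros [i [H|H]]; exact (ev_lt f q _ H). Qed.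

Lemma nstr_succ f s e : ev f s = Some e -> nstr f (s + 1) = step_count (nstr f s) e.
Proof.
  intro H. unfold nstr, ev in *.
  rewrite Nat.add_1_r, (firstn_succ_snoc _ _ _ H), fold_left_app. reflexivity.
Qed.

Lemma valid_from_skipn f n s : valid_from n f -> s <= length f ->
  valid_from (fold_left step_count (firstn s f) n) (skipn s f).
Proof.
  revert n s; induction f as [|e f IH]; intros n [|s] H Hs; simpl in *; auto; try lia.
  destruct H as [_ H]. apply IH; auto; lia.
Qed.

Lemma ev_ok f s e : valid_front f -> ev f s = Some e -> event_ok (nstr f s) e.
Proof.
  intros Hv H.
  pose proof (valid_from_skipn f 0 s Hv (Nat.lt_le_incl _ _ (ev_lt f s e H))) as V.
  pose proof (hd_error_skipn s f) as Hd. unfold ev in H. rewrite H in Hd.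
  destruct (skipn s f) as [|e' rest]; simpl in Hd; [discriminate|].
  injection Hd as ->. exact (proj1 V).
Qed.

Lemma nstr_length f : valid_front f -> nstr f (length f) = 0.
Proof.
  intro Hv. pose proof (valid_from_skipn f 0 (length f) Hv (le_n _)) as V.
  rewrite skipn_all in V. exact V.
Qed.

Lemma valid_from_rcusp f n : valid_from n f -> 0 < n -> exists i, In (RCusp i) f.
Proof.
  revert n; induction f as [|e f IH]; intros n H Hn; simpl in H; [lia|].
  destruct H as [_ H]. destruct e as [i|i|i]; simpl in H.
  - destruct (IH _ H ltac:(lia)) as [j Hj]. exists j. right. exact Hj.
  - destruct (IH _ H Hn) as [j Hj]. exists j. right. exact Hj.
  - exists i. left. reflexivity.
Qed.

Lemma strand_rcusp f a : valid_front f -> strand_node f a ->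
  exists q i, ev f q = Some (RCusp i).
Proof.
  intros Hv [Hs Ha].
  destruct (valid_from_rcusp _ _ (valid_from_skipn f 0 (fst a) Hv Hs) ltac:(unfold nstr in Ha; lia))
    as [i Hi].
  destruct (In_nth_error _ _ Hi) as [t Ht]. rewrite nth_error_skipn in Ht.
  exists (fst a + t), i. exact Ht.
Qed.

Definition positive_at (f : front) (k : rkey) (r : nat) : Prop :=
  is_crossing f r /\ (0 < alpha f k r)%Z.

(* [GapK q i] and [GapK q (i + 2)] are the lower and upper quadrants of the
   crossing q, the only corners with Reeb sign -1; [GapK q (i + 1)] is its
   left quadrant. *)
Lemma alpha_ge0_off_negative_corners f k q i :
  (ev f q = Some (Cross i) \/ ev f q = Some (RCusp i)) ->
  ~ same_patch f k (GapK q i) -> ~ same_patch f k (GapK q (i + 2)) ->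
  (0 <= alpha f k q)%Z /\ (same_patch f k (GapK q (i + 1)) -> (0 < alpha f k q)%Z).
Proof.
  intros [H|H] Hlo Hhi; unfold alpha, corners; rewrite H; cbn [fold_right fst snd];
    repeat destruct (excluded_middle_informative _); try contradiction;
    split; intros; try lia; contradiction.
Qed.

Lemma alpha_loop_self f s i : ev f s = Some (RCusp i) -> alpha f (LoopK s) s = 1%Z.
Proof.
  intro H; unfold alpha, corners; rewrite H; cbn [fold_right fst snd same_patch];
    repeat destruct (excluded_middle_informative _); try contradiction; lia.
Qed.

Section Regions.

Variable f : front.
Hypothesis Hv : valid_front f.

Lemma bottom_gap_unbounded t : t <= length f -> same_region f (t, 0) (0, 0).
Proof.
  induction t as [|t IH]; intro Ht; [apply rst_refl|].
  destruct (ev_exists f t ltac:(lia)) as [e He].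
  assert (E : gap_edge f (t, 0) (t + 1, 0)).
  { right. exists t, e. split; [exact He|].
    destruct e; exists 0; split; try lia;
      try (left; repeat split; auto; lia); repeat split; auto; lia. }
  replace (S t) with (t + 1) by lia.
  eapply rst_trans; [apply rst_sym, rst_step, E | apply IH; lia].
Qed.

Lemma negative_corner_continues s0 g0 q i :
  (ev f q = Some (Cross i) \/ ev f q = Some (RCusp i)) ->
  same_region f (s0, g0) (q, i) \/ same_region f (s0, g0) (q, i + 2) ->
  exists g', g' <= nstr f (q + 1) /\ same_region f (s0, g0) (q + 1, g').
Proof.
  intros Hq Hs.
  assert (next : forall g g', g' <= nstr f (q + 1) -> same_region f (s0, g0) (q, g) ->
            gap_edge f (q, g) (q + 1, g') ->
            exists g', g' <= nstr f (q + 1) /\ same_region f (s0, g0) (q + 1, g')).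
  { intros g g' Hg' Hr E. exists g'. split; [exact Hg'|].
    eapply rst_trans; [exact Hr | apply rst_step, E]. }
  destruct Hq as [Hq|Hq]; pose proof (ev_ok f q _ Hv Hq) as ok;
    pose proof (nstr_succ f q _ Hq) as ns; simpl in ok, ns.
  - destruct Hs as [Hs|Hs].
    + apply (next i i); [lia | exact Hs|]. right. exists q, (Cross i).
      split; [exact Hq|]. exists i; repeat split; auto; lia.
    + apply (next (i + 2) (i + 2)); [lia | exact Hs|]. right. exists q, (Cross i).
      split; [exact Hq|]. exists (i + 2); repeat split; auto; lia.
  - destruct Hs as [Hs|Hs].
    + apply (next i i); [lia | exact Hs|]. right. exists q, (RCusp i).
      split; [exact Hq|]. exists i; split; [lia|]. left; auto.
    + apply (next (i + 2) i); [lia | exact Hs|]. right. exists q, (RCusp i).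
      split; [exact Hq|]. exists (i + 2); split; [lia|]. right.
      repeat split; auto. f_equal; lia.
Qed.

Lemma region_advances_or_positive s0 g0 s g :
  s < length f -> g <= nstr f s -> same_region f (s0, g0) (s, g) ->
  (exists g', g' <= nstr f (s + 1) /\ same_region f (s0, g0) (s + 1, g'))
  \/ positive_at f (GapK s0 g0) s.
Proof.
  intros Hs Hg Hr.
  destruct (ev_exists f s Hs) as [e He].
  pose proof (ev_ok f s _ Hv He) as ok. pose proof (nstr_succ f s _ He) as ns.
  assert (advance : forall g', g' <= nstr f (s + 1) -> gap_edge f (s, g) (s + 1, g') ->
            exists g', g' <= nstr f (s + 1) /\ same_region f (s0, g0) (s + 1, g')).
  { intros g' Hg' E. exists g'. split; [exact Hg'|].
    eapply rst_trans; [exact Hr | apply rst_step, E]. }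
  assert (left_quadrant : forall i, (ev f s = Some (Cross i) \/ ev f s = Some (RCusp i)) ->
            g = i + 1 ->
            (exists g', g' <= nstr f (s + 1) /\ same_region f (s0, g0) (s + 1, g'))
            \/ positive_at f (GapK s0 g0) s).
  { intros i Hi ->.
    destruct (classic (same_region f (s0, g0) (s, i) \/ same_region f (s0, g0) (s, i + 2)))
      as [Hn|Hn].
    - left. exact (negative_corner_continues s0 g0 s i Hi Hn).
    - right. split; [exists i; exact Hi|].
      apply (alpha_ge0_off_negative_corners f (GapK s0 g0) s i Hi); simpl; tauto. }
  destruct e as [i|i|i]; simpl in ok, ns.
  - left. destruct (le_lt_dec g i).
    + apply (advance g); [lia|]. right. exists s, (LCusp i). split; [exact He|].
      exists g; split; [lia|]; left; auto.
    + apply (advance (g + 2)); [lia|]. right. exists s, (LCusp i). split; [exact He|].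
      exists g; split; [lia|]; right; repeat split; auto; lia.
  - destruct (Nat.eq_dec g (i + 1)); [apply (left_quadrant i); auto|].
    left. apply (advance g); [lia|]. right. exists s, (Cross i). split; [exact He|].
    exists g; repeat split; auto; lia.
  - destruct (Nat.eq_dec g (i + 1)); [apply (left_quadrant i); auto|].
    left. destruct (le_lt_dec g i).
    + apply (advance g); [lia|]. right. exists s, (RCusp i). split; [exact He|].
      exists g; split; [lia|]; left; auto.
    + apply (advance (g - 2)); [lia|]. right. exists s, (RCusp i). split; [exact He|].
      exists g; split; [lia|]; right; repeat split; auto; lia.
Qed.

Lemma bounded_region_positive_right s0 g0 :
  ~ same_region f (s0, g0) (0, 0) ->
  forall s g, s <= length f -> g <= nstr f s -> same_region f (s0, g0) (s, g) ->
  exists r, s <= r /\ positive_at f (GapK s0 g0) r.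
Proof.
  intros Hb s g Hs. remember (length f - s) as m eqn:Hm. revert s g Hs Hm.
  induction m as [|m IH]; intros s g Hs Hm Hg Hr.
  - exfalso. assert (s = length f) by lia. subst s.
    rewrite nstr_length in Hg by exact Hv. replace g with 0 in Hr by lia.
    apply Hb. eapply rst_trans; [exact Hr | apply bottom_gap_unbounded; lia].
  - destruct (region_advances_or_positive s0 g0 s g ltac:(lia) Hg Hr)
      as [[g' [Hg' Hr']]|Hpos].
    + destruct (IH (s + 1) g' ltac:(lia) ltac:(lia) Hg' Hr') as [r [Hsr Hpos]].
      exists r. split; [lia | exact Hpos].
    + exists s. split; [lia | exact Hpos].
Qed.

Lemma patch_positive k : is_patch f k -> exists r, positive_at f k r.
Proof.
  destruct k as [s0 g0|s].
  - intros [[Hs Hg] Hb].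
    destruct (bounded_region_positive_right s0 g0 Hb s0 g0 Hs Hg (rst_refl _ _ _))
      as [r [_ Hr]].
    eauto.
  - intros [i Hi]. exists s. split; [exists i; right; exact Hi|].
    rewrite (alpha_loop_self f s i Hi). lia.
Qed.

Lemma negative_then_positive_right k q :
  is_patch f k -> is_crossing f q -> (alpha f k q < 0)%Z ->
  exists r, q < r /\ positive_at f k r.
Proof.
  intros Hk [i Hq] Hneg.
  destruct (classic (same_patch f k (GapK q i) \/ same_patch f k (GapK q (i + 2))))
    as [Hs|Hs].
  - destruct k as [s0 g0|s]; [|simpl in Hs; tauto].
    destruct Hk as [_ Hb].
    destruct (negative_corner_continues s0 g0 q i Hq Hs) as [g' [Hg' Hr]].
    pose proof (crossing_lt f q (ex_intro _ i Hq)).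
    destruct (bounded_region_positive_right s0 g0 Hb (q + 1) g' ltac:(lia) Hg' Hr)
      as [r [Hqr Hpos]].
    exists r. split; [lia | exact Hpos].
  - exfalso. destruct (alpha_ge0_off_negative_corners f k q i Hq) as [H _]; try tauto.
    lia.
Qed.

End Regions.

Definition flood_inv (f : front) (Rp : rkey -> Prop) (A : nat -> Prop) : Prop :=
  (forall k, Rp k -> is_patch f k) /\ (forall q k, A q -> Rp k -> (alpha f k q <= 0)%Z).

Lemma flood_inv_step f Rp A :
  flood_inv f Rp A -> flood_inv f (flood_remove f Rp A) (flood_assign f Rp A).
Proof.
  intros [Hpatch Hle]. split.
  - intros k [Hk _]. auto.
  - intros q k [Hq|Hq] [Hk Hkeep]; [auto|].
    destruct (Z.le_gt_cases (alpha f k q) 0) as [H|H]; [exact H|].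
    exfalso. apply Hkeep. exists q. split; [exact Hq | lia].
Qed.

Lemma remaining_patch_unassigned f Rp A k : valid_front f -> flood_inv f Rp A -> Rp k ->
  exists q, is_crossing f q /\ ~ A q.
Proof.
  intros Hv [Hpatch Hle] Hk.
  destruct (patch_positive f Hv k (Hpatch k Hk)) as [r [Hr Hpos]].
  exists r. split; [exact Hr|]. intro Ar. specialize (Hle r k Ar Hk). lia.
Qed.

Lemma rightmost_unassigned_cand f Rp A q : valid_front f -> flood_inv f Rp A ->
  is_crossing f q -> ~ A q -> (forall r, q < r -> is_crossing f r -> A r) ->
  tier_cand f Rp A q.
Proof.
  intros Hv [Hpatch Hle] Hq HAq Hright. split; [exact Hq|]. split; [exact HAq|].
  intros k Hk. destruct (Z.lt_ge_cases (alpha f k q) 0) as [Hneg|H]; [|exact H].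
  destruct (negative_then_positive_right f Hv k q (Hpatch k Hk) Hq Hneg)
    as [r [Hqr [Hr Hpos]]].
  specialize (Hle r k (Hright r Hqr Hr) Hk). lia.
Qed.

(* The induction is on a strict upper bound n for the unassigned crossings:
   a round that assigns the rightmost unassigned crossing m lowers it to m. *)
Lemma flood_succeeds_bounded f : valid_front f ->
  forall n Rp A, flood_inv f Rp A -> (forall q, is_crossing f q -> ~ A q -> q < n) ->
  (exists q, is_crossing f q /\ ~ A q) -> flood_succeeds f Rp A.
Proof.
  intros Hv n; induction n as [|m IH]; intros Rp A Hinv Hbound Hex.
  - destruct Hex as [q [Hq HAq]]. specialize (Hbound q Hq HAq). lia.
  - destruct (classic (is_crossing f m /\ ~ A m)) as [[Hm HAm]|Hm].
    + assert (Hcand : tier_cand f Rp A m).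
      { apply rightmost_unassigned_cand; auto.
        intros r Hmr Hr. apply NNPP. intro HAr. specialize (Hbound r Hr HAr). lia. }
      destruct (classic (exists k, flood_remove f Rp A k)) as [[k Hk]|Hnone].
      * apply flood_next; [eauto | eauto |].
        apply IH; [apply flood_inv_step; exact Hinv | |].
        -- intros q Hq Hna.
           assert (q <> m) by (intros ->; apply Hna; right; exact Hcand).
           assert (q < S m) by (apply Hbound; [exact Hq | intro; apply Hna; left; auto]).
           lia.
        -- exact (remaining_patch_unassigned f _ _ k Hv (flood_inv_step f Rp A Hinv) Hk).
      * apply flood_last; [eauto|]. intros k Hk. apply Hnone. eauto.
    + apply IH; auto. intros q Hq HAq.
      assert (q <> m) by (intros ->; tauto).
      specialize (Hbound q Hq HAq). lia.
Qed.

Theorem mainTheorem7 (f : front) :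
  knot_front f -> flooding_succeeds f.
Proof.
  intros [Hv [[a Ha] _]].
  destruct (strand_rcusp f a Hv Ha) as [q [i Hq]].
  apply (flood_succeeds_bounded f Hv (length f)).
  - split; [auto | intros q' k []].
  - intros q' Hq' _. exact (crossing_lt f q' Hq').
  - exists q. split; [exists i; right; exact Hq | auto].
Qed.
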